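(* Let $A$ be a nonempty set of positive integers, let $s\in A$ and let $n$ be a positive integer. Then $$N^p_A(n)-N^p_A(n-s)=p_A(n-s)+N^p_{A\setminus\{s\}}(n).$$
   Context: For a set $B$ of positive integers, $N^p_B(m)$ is the total number of parts, summed over all partitions of $m$ with parts in $B$, and $p_B(m)$ is the number of partitions of $m$ with parts in $B$. Conventions: $p_B(0)=1$, $N^p_B(0)=0$, and $p_B(m)=N^p_B(m)=0$ for $m<0$; $N^p_{\emptyset}\equiv 0$. *)

From mathcomp Require Import all_boot all_order all_algebra.
Set Implicit Arguments. Unset Strict Implicit. Unset Printing Implicit Defensive.

(* A partition of m with parts in B: a nonincreasing sequence of positive
   parts, each in B, summing to m (order-normalized multiset of parts). *)
Definition is_partition (B : pred nat) (m : nat) (s : seq nat) : bool :=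
  [&& sorted geq s, all (fun x => (0 < x) && B x) s & sumn s == m].

Fixpoint cands (k m : nat) : seq (seq nat) :=
  match k with
  | 0 => [:: [::]]
  | k'.+1 => [::] :: [seq x :: s | x <- iota 1 m, s <- cands k' m]
  end.

(* Every partition of m has at most m parts, each at most m, so it occurs in
   cands m m; the list of partitions of m with parts in B: *)
Definition partitions (B : pred nat) (m : nat) : seq (seq nat) :=
  [seq s <- undup (cands m m) | is_partition B m s].

Definition pnat (B : pred nat) (m : nat) : nat := size (partitions B m).
Definition Nnat (B : pred nat) (m : nat) : nat :=
  \sum_(s <- partitions B m) size s.

Definition pB (B : pred nat) (m : int) : int :=
  match m with Posz k => (pnat B k)%:Z | Negz _ => 0%R end.
Definition NB (B : pred nat) (m : int) : int :=
  match m with Posz k => (Nnat B k)%:Z | Negz _ => 0%R end.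

Lemma sanity : (pnat predT 4 = 5 /\ Nnat predT 4 = 12 /\ pnat predT 0 = 1 /\ Nnat predT 0 = 0)%N.
Proof. by rewrite /Nnat !unlock; vm_compute. Qed.

From Pilot Require Import Defs.
From mathcomp Require Import all_boot all_order all_algebra zify.

(* Removing one copy of the part s is a bijection from the partitions of m
   with parts in A that contain s onto the partitions of m - s; its inverse
   inserts s.  Each such partition loses exactly one part, so these
   partitions contribute N_A(m - s) + p_A(m - s) parts in total, while the
   partitions avoiding s are exactly those with parts in A \ {s}. *)

Lemma geq_trans : transitive geq.
Proof. by move=> n m p /= le_nm le_pn; apply: leq_trans le_pn le_nm. Qed.

Lemma geq_anti : antisymmetric geq.
Proof. by move=> m n /andP[le_nm le_mn]; apply/anti_leq/andP. Qed.

Lemma geq_total : total geq.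
Proof. by move=> m n; rewrite /= orbC leq_total. Qed.

Lemma leq_size_sumn t : all (leq 1) t -> size t <= sumn t.
Proof. by elim: t => //= x t IHt /andP[x_gt0 /IHt]; lia. Qed.

Lemma leq_mem_sumn x t : x \in t -> x <= sumn t.
Proof. by elim: t => //= y t IHt; rewrite in_cons => /orP[/eqP->|/IHt]; lia. Qed.

Lemma mem_cands_bounded k m t : size t <= k -> all (fun x => 0 < x <= m) t -> t \in cands k m.
Proof.
elim: t k => [|x t IHt] [|k] //=; rewrite ?in_cons ?eqxx // ltnS.
move=> le_tk /andP[x_in t_in]; apply/orP; right.
by apply: allpairs_f; [rewrite mem_iota; lia | exact: IHt].
Qed.

Lemma sort_cons_rem s t : s \in t -> sorted geq t -> sort geq (s :: rem s t) = t.
Proof.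
move=> t_s t_sorted; rewrite -[RHS](sorted_sort geq_trans t_sorted).
by apply/(perm_sortP geq_total geq_trans geq_anti); rewrite perm_sym perm_to_rem.
Qed.

Lemma rem_sort_cons s u : sorted geq u -> rem s (sort geq (s :: u)) = u.
Proof.
move=> u_sorted; have s_in : s \in sort geq (s :: u) by rewrite mem_sort mem_head.
apply: (sorted_eq geq_trans geq_anti) => //.
  exact: (subseq_sorted geq_trans (rem_subseq _ _) (sort_sorted geq_total _)).
by rewrite -(perm_cons s) -(permPl (perm_to_rem s_in)) perm_sort.
Qed.

Lemma mem_partitions B m t : (t \in partitions B m) = is_partition B m t.
Proof.
rewrite mem_filter mem_undup andb_idr // => /and3P[_ t_in /eqP t_sum].
apply: mem_cands_bounded; rewrite -t_sum.
  by apply: leq_size_sumn; apply: sub_all t_in => x /andP[].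
by apply/allP => x t_x; have /andP[-> _] := allP t_in x t_x; rewrite leq_mem_sumn.
Qed.

Lemma uniq_partitions B m : uniq (partitions B m).
Proof. by rewrite filter_uniq // undup_uniq. Qed.

Section Partitions.

Variable B : pred nat.

Lemma is_partition_rem m s t :
  s \in t -> is_partition B m t -> is_partition B (m - s) (rem s t).
Proof.
move=> t_s /and3P[t_sorted t_in /eqP t_sum]; have t_perm := perm_to_rem t_s.
rewrite /is_partition (subseq_sorted geq_trans (rem_subseq _ _)) //=.
rewrite (perm_all _ t_perm) /= in t_in; case/andP: t_in => _ ->.
by rewrite (perm_sumn t_perm) /= in t_sum; apply/eqP; lia.
Qed.

Lemma is_partition_sort_cons m s u : 0 < s -> B s ->
  is_partition B m u -> is_partition B (s + m) (sort geq (s :: u)).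
Proof.
move=> s_gt0 Bs /and3P[_ u_in /eqP u_sum].
rewrite /is_partition sort_sorted; last exact: geq_total.
have u_perm := permEl (perm_sort geq (s :: u)).
by rewrite (perm_all _ u_perm) (perm_sumn u_perm) /= s_gt0 Bs u_in u_sum eqxx.
Qed.

Lemma perm_partitions_rem m s : 0 < s -> B s -> s <= m ->
  perm_eq [seq rem s t | t <- partitions B m & s \in t] (partitions B (m - s)).
Proof.
move=> s_gt0 Bs le_sm.
have memP t : t \in [seq t <- partitions B m | s \in t] -> s \in t /\ is_partition B m t.
  by rewrite mem_filter mem_partitions => /andP[].
apply: uniq_perm; last 1 first.
- move=> u; rewrite mem_partitions; apply/mapP/idP => [[t /memP[t_s t_part] ->]|u_part].
    exact: is_partition_rem.
  exists (sort geq (s :: u)); last by rewrite rem_sort_cons //; case/and3P: u_part.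
  rewrite mem_filter mem_sort mem_head mem_partitions -{1}(subnKC le_sm).
  exact: is_partition_sort_cons.
- rewrite map_inj_in_uniq ?(filter_uniq _ (uniq_partitions B m)) //.
  move=> t1 t2 /memP[t1_s /and3P[t1_sorted _ _]] /memP[t2_s /and3P[t2_sorted _ _]] eq_rem.
  by rewrite -(sort_cons_rem _ _ t1_s t1_sorted) eq_rem sort_cons_rem.
- exact: uniq_partitions.
Qed.

Lemma sum_size_partitions_mem m s : 0 < s -> B s ->
  \sum_(t <- partitions B m | s \in t) size t =
  (if s <= m then Nnat B (m - s) + Defs.pnat B (m - s) else 0).
Proof.
move=> s_gt0 Bs; case: leqP => [le_sm | lt_ms]; last first.
  rewrite big_seq_cond big_pred0 // => t; apply/negbTE/andP.
  case; rewrite mem_partitions => /and3P[_ _ /eqP t_sum] /leq_mem_sumn; lia.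
rewrite -big_filter; transitivity
  (\sum_(u <- [seq rem s t | t <- partitions B m & s \in t]) (size u + 1)).
  rewrite big_map big_seq [RHS]big_seq; apply: eq_bigr => t.
  rewrite mem_filter => /andP[t_s _].
  by rewrite size_rem // addn1 prednK //; case: t t_s.
by rewrite (perm_big _ (perm_partitions_rem _ _ s_gt0 Bs le_sm)) big_split sum1_size.
Qed.

Lemma perm_partitions_notin m s :
  perm_eq [seq t <- partitions B m | s \notin t] (partitions (fun x => B x && (x != s)) m).
Proof.
apply: uniq_perm; rewrite ?(filter_uniq _ (uniq_partitions B m)) ?uniq_partitions // => t.
have all_notin : all (fun x => (0 < x) && (B x && (x != s))) t =
                 (s \notin t) && all (fun x => (0 < x) && B x) t.
  elim: t => //= x t ->; rewrite in_cons negb_or [x == s]eq_sym.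
  by case: (s == x); case: (s \in t); rewrite /= ?andbF ?andbT.
by rewrite mem_filter !mem_partitions /is_partition all_notin -andbA andbCA.
Qed.

Lemma Nnat_split m s : 0 < s -> B s ->
  Nnat B m = (if s <= m then Nnat B (m - s) + Defs.pnat B (m - s) else 0)
             + Nnat (fun x => B x && (x != s)) m.
Proof.
move=> s_gt0 Bs; rewrite /Nnat (bigID (fun t => s \in t)) /=.
rewrite sum_size_partitions_mem // -big_filter.
by rewrite (perm_big _ (perm_partitions_notin m s)).
Qed.

End Partitions.

Import GRing.Theory.
Local Open Scope ring_scope.

Theorem theorem5 (A : pred nat) (s n : nat) :
  (forall x, A x -> (0 < x)%N) -> A s -> (0 < n)%N ->
  NB A n%:Z - NB A (n%:Z - s%:Z) =
  pB A (n%:Z - s%:Z) + NB (fun x => A x && (x != s)) n%:Z.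
Proof.
move=> A_pos As _; rewrite /= (Nnat_split A n s (A_pos s As) As).
case: (leqP s n) => [le_sn | lt_ns].
  by rewrite subzn //= !PoszD; lia.
have : n%:Z - s%:Z < 0 by lia.
by case: (n%:Z - s%:Z) => [k|k] //= _; rewrite subr0 add0r.
Qed.
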